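(* For every integer $n>2$ there exists a unique $\zeta_n>1$ such that the system $$P_n'(1-\varepsilon_{j+1})-P_n'(1-\varepsilon_j)=\varepsilon_{j+1}P_n'(1-\varepsilon_{j+1})+P_n(1-\varepsilon_{j+1})-\frac{j}{\zeta_n},\qquad j=1,\dots,n-1,$$ with initial condition $\varepsilon_1=1$ has a solution $(\varepsilon_j)_{j=1}^n$ satisfying $0\le\varepsilon_n<\dots<\varepsilon_2<\varepsilon_1=1$ and $$\zeta_n=\frac{n}{\varepsilon_nP_n'(1-\varepsilon_n)+P_n(1-\varepsilon_n)}.$$
   Context: $P_n(t)=\sum_{i=1}^nt^i$ and $P_n'(t)=\sum_{i=1}^n i\,t^{i-1}$. *)

From mathcomp Require Import all_boot all_order all_algebra.
From mathcomp Require Import reals.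
Set Implicit Arguments. Unset Strict Implicit. Unset Printing Implicit Defensive.
Import Order.TTheory GRing.Theory Num.Theory.
Local Open Scope ring_scope.

Definition Pn {R : realType} (n : nat) (t : R) : R :=
  \sum_(1 <= i < n.+1) t ^+ i.

Definition dPn {R : realType} (n : nat) (t : R) : R :=
  \sum_(1 <= i < n.+1) i%:R * t ^+ (i.-1).

(* With [y_j = 1 - eps_j] and [c = 1 / zeta], the j-th equation reads
   [G(y_(j+1)) = P'(y_j) - j c] with [G(t) = t P'(t) - P(t)], and the formula for
   [zeta] reads [H(y_n) = n c] with [H(t) = (1 - t) P'(t) + P(t)].  On [[0, 1]], [G]
   increases strictly from [0] to [G(1)] and [H] is nondecreasing.  Hence, inverting
   [G] (clamped to [[0, 1]]), every [c] determines a sequence [y_j(c)] that is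
   continuous and nonincreasing in [c], and [F(c) = H(y_n(c)) - n c] is strictly
   decreasing, positive at [0] and negative at [1]: it has exactly one root.  At the
   root no clamping happens and [y_j] increases strictly: as soon as the defect
   [H(y_j) - j c] is [<= 0] it drops by at least [c] at every later step, so it could
   not vanish at [j = n]; and a [y_j] equal to [1] would stay [1] and force
   [F(c) = n (1 - c) > 0]. *)

From mathcomp Require Import all_boot all_order all_algebra.
From mathcomp Require Import reals.
From mathcomp Require Import boolp topology normedtype realfun derive.
From mathcomp Require Import ring lra.
Import Order.TTheory GRing.Theory Num.Theory numFieldNormedType.Exports.
Set Implicit Arguments. Unset Strict Implicit. Unset Printing Implicit Defensive.
Local Open Scope ring_scope.

Section PowerBounds.
Variable R : realDomainType.
Implicit Types x y : R.

Lemma exprB_lower_bound m x y : 0 <= x -> x <= y -> x <= 1 ->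
  m%:R * x ^+ m * (y - x) <= y ^+ m - x ^+ m.
Proof.
move=> x0 xy x1; elim: m => [|m IH]; first by rewrite !mul0r subrr.
rewrite !exprS -natr1.
have p0 : 0 <= x ^+ m by rewrite exprn_ge0.
set p := x ^+ m in p0 IH *; set a := y ^+ m in IH *.
have h1 : 0 <= (y - x) * (m%:R * p * (y - x)).
  by apply: mulr_ge0; [lra | apply: mulr_ge0; [apply: mulr_ge0 | lra]].
have h2 : 0 <= (1 - x) * (p * (y - x)).
  by apply: mulr_ge0; [lra | apply: mulr_ge0; [| lra]].
have h3 : y * (m%:R * p * (y - x)) <= y * (a - p) by apply: ler_wpM2l; lra.
nra.
Qed.

(* [(m+1) x^m - m x^(m+1)] is the value at 1 of the tangent to [t^(m+1)] at [x];
   its derivative is [m (m+1) x^(m-1) (1 - x)]. *)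
Lemma tangent_at1_homo m x y : 0 <= x -> x <= y -> y <= 1 ->
  m.+1%:R * x ^+ m - m%:R * x ^+ m.+1 <= m.+1%:R * y ^+ m - m%:R * y ^+ m.+1.
Proof.
move=> x0 xy y1.
have B := exprB_lower_bound m x0 xy (le_trans xy y1).
rewrite !exprS -natr1.
have p0 : 0 <= x ^+ m by rewrite exprn_ge0.
set p := x ^+ m in p0 B *; set a := y ^+ m in B *.
have h2 : 0 <= m%:R * p * (y - x) by apply: mulr_ge0; [apply: mulr_ge0 | lra].
have h1 : 0 <= (m%:R * (1 - y)) * (a - p).
  by apply: mulr_ge0; [apply: mulr_ge0 => //; lra | lra].
nra.
Qed.

End PowerBounds.

Section PnTheory.
Variable R : realType.
Variable n : nat.
Implicit Types x y t : R.

Lemma PnE t : Pn n t = \sum_(i < n) t ^+ i.+1.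
Proof. by rewrite /Pn big_add1 big_mkord. Qed.

Lemma dPnE t : dPn n t = \sum_(i < n) i.+1%:R * t ^+ i.
Proof. by rewrite /dPn big_add1 big_mkord. Qed.

(* The tangent to [Pn n] at [t] takes the value [- Gn t] at 0 and [Hn t] at 1. *)
Definition Gn t : R := t * dPn n t - Pn n t.
Definition Hn t : R := dPn n t - Gn t.

Lemma GnE t : Gn t = \sum_(i < n) i%:R * t ^+ i.+1.
Proof.
rewrite /Gn PnE dPnE mulr_sumr -sumrB; apply: eq_bigr => i _.
by rewrite exprS -natr1; ring.
Qed.

Lemma Hn_tangent t : Hn t = (1 - t) * dPn n t + Pn n t.
Proof. by rewrite /Hn /Gn; ring. Qed.

Lemma HnE t : Hn t = \sum_(i < n) (i.+1%:R * t ^+ i - i%:R * t ^+ i.+1).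
Proof. by rewrite /Hn GnE dPnE -sumrB. Qed.

Definition Pn_poly : {poly R} := \sum_(i < n) 'X^(i.+1).
Definition dPn_poly : {poly R} := \sum_(i < n) i.+1%:R *: 'X^i.

Lemma horner_Pn_poly t : Pn_poly.[t] = Pn n t.
Proof. by rewrite PnE horner_sum; apply: eq_bigr => i _; rewrite hornerXn. Qed.

Lemma horner_dPn_poly t : dPn_poly.[t] = dPn n t.
Proof. by rewrite dPnE horner_sum; apply: eq_bigr => i _; rewrite hornerZ hornerXn. Qed.

Lemma dPn_continuous : continuous (dPn n : R -> R).
Proof.
have -> : dPn n = horner dPn_poly by apply/funext => t; rewrite horner_dPn_poly.
exact: continuous_horner.
Qed.

Lemma Gn_continuous : continuous Gn.
Proof.
have -> : Gn = horner ('X * dPn_poly - Pn_poly).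
  by apply/funext => t; rewrite !hornerE horner_dPn_poly horner_Pn_poly.
exact: continuous_horner.
Qed.

Lemma Hn_continuous : continuous Hn.
Proof.
have -> : Hn = horner (dPn_poly - ('X * dPn_poly - Pn_poly)).
  by apply/funext => t; rewrite !hornerE horner_dPn_poly horner_Pn_poly.
exact: continuous_horner.
Qed.

Lemma dPn_homo x y : 0 <= x -> x <= y -> dPn n x <= dPn n y.
Proof.
move=> x0 xy; rewrite !dPnE; apply: ler_sum => i _; apply: ler_wpM2l => //.
by apply: lerXn2r; rewrite // nnegrE (le_trans x0 xy).
Qed.

Lemma Gn_homo x y : 0 <= x -> x <= y -> Gn x <= Gn y.
Proof.
move=> x0 xy; rewrite !GnE; apply: ler_sum => i _; apply: ler_wpM2l => //.
by apply: lerXn2r; rewrite ?nnegrE //; lra.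
Qed.

Lemma Hn_homo x y : 0 <= x -> x <= y -> y <= 1 -> Hn x <= Hn y.
Proof.
by move=> x0 xy y1; rewrite !HnE; apply: ler_sum => i _; apply: tangent_at1_homo.
Qed.

Lemma Gn_strict x y : (1 < n)%N -> 0 <= x -> x < y -> Gn x < Gn y.
Proof.
move=> n_gt1 x0 xy; rewrite !GnE (bigD1 (Ordinal n_gt1)) //.
rewrite [X in _ < X](bigD1 (Ordinal n_gt1)) //= !mul1r.
apply: ltr_leD; first by rewrite ltrXn2r.
apply: ler_sum => i _; apply: ler_wpM2l => //.
by apply: lerXn2r; rewrite ?nnegrE //; lra.
Qed.

Lemma Gn0 : Gn 0 = 0.
Proof. by rewrite GnE big1 // => i _; rewrite expr0n mulr0. Qed.

Lemma Hn0 : (0 < n)%N -> Hn 0 = 1.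
Proof.
rewrite HnE; case: n => // m _; rewrite big_ord_recl /= expr0 !expr0n mulr1 mulr0 subr0.
by rewrite big1 ?addr0 // => i _; rewrite !expr0n /= !mulr0 subr0.
Qed.

Lemma Gn1_ge0 : 0 <= Gn 1.
Proof. by rewrite -Gn0; apply: Gn_homo. Qed.

Lemma dPn0 : (0 < n)%N -> dPn n (0 : R) = 1.
Proof. by move=> n0; have := Hn0 n0; rewrite /Hn Gn0 subr0. Qed.

Lemma Hn1 : Hn 1 = n%:R.
Proof.
rewrite HnE (eq_bigr (fun _ => 1)) ?sumr_const ?card_ord // => i _.
by rewrite !expr1n !mulr1 -natr1 addrC addKr.
Qed.

Lemma Hn_ge1 x : (0 < n)%N -> 0 <= x -> x <= 1 -> 1 <= Hn x.
Proof. by move=> n0 x0 x1; rewrite -(Hn0 n0); apply: Hn_homo. Qed.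

End PnTheory.

Definition clamp01 {R : realType} (x : R) : R := Order.min (Order.max x 0) 1.

Section RealFunctions.
Variable R : realType.
Implicit Types x y : R.

Lemma clamp01E x : clamp01 x = if x < 0 then 0 else if 1 < x then 1 else x.
Proof.
rewrite /clamp01 /Order.min /Order.max /=.
by case: (ltP x 0) => ?; case: (ltP 1 x) => ?; repeat case: ifP => /=; lra.
Qed.

Lemma clamp01_ge0 x : 0 <= clamp01 x.
Proof. by rewrite clamp01E; case: (ltP x 0) => ?; case: (ltP 1 x) => ?; lra. Qed.

Lemma clamp01_le1 x : clamp01 x <= 1.
Proof. by rewrite clamp01E; case: (ltP x 0) => ?; case: (ltP 1 x) => ?; lra. Qed.

Lemma clamp01_id x : 0 <= x -> x <= 1 -> clamp01 x = x.
Proof. by rewrite clamp01E; case: (ltP x 0) => ?; case: (ltP 1 x) => ?; lra. Qed.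

Lemma clamp01_homo x y : x <= y -> clamp01 x <= clamp01 y.
Proof.
rewrite !clamp01E.
by case: (ltP x 0) => ?; case: (ltP y 0) => ?; case: (ltP 1 x) => ?; case: (ltP 1 y) => ?; lra.
Qed.

Lemma clamp01_excess_homo x y : x <= y -> x - clamp01 x <= y - clamp01 y.
Proof.
rewrite !clamp01E.
by case: (ltP x 0) => ?; case: (ltP y 0) => ?; case: (ltP 1 x) => ?; case: (ltP 1 y) => ?; lra.
Qed.

Lemma clamp01_continuous : continuous (@clamp01 R).
Proof.
move=> x; apply: (@continuous_min R R (fun x => Order.max x 0) (fun _ => 1)).
  by apply: (@continuous_max R R id (fun _ => 0)); [exact: cvg_id | exact: cst_continuous].
exact: cst_continuous.
Qed.

Lemma continuousB_real (f g : R -> R) x : {for x, continuous f} -> {for x, continuous g} ->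
  {for x, continuous (fun z => f z - g z)}.
Proof. exact: (@continuousB R R^o R f g x). Qed.

Lemma scale_continuous (a : R) : continuous (fun c : R => a * c).
Proof.
move=> c; apply: (@continuousM R R (fun _ => a) id c); first exact: cst_continuous.
exact: cvg_id.
Qed.

End RealFunctions.

Section GnInverse.
Variable R : realType.
Variable n : nat.
Hypothesis n_gt1 : (1 < n)%N.
Implicit Types x y : R.

Local Notation G := (@Gn R n).

(* [G] extended to a strictly increasing bijection of the line, with slope 1 outside
   [[0, 1]]. *)
Definition Gn_ext x : R := G (clamp01 x) + (x - clamp01 x).

Lemma Gn_extE x : 0 <= x -> x <= 1 -> Gn_ext x = G x.
Proof. by move=> x0 x1; rewrite /Gn_ext clamp01_id // subrr addr0. Qed.

Lemma Gn_ext_continuous : continuous Gn_ext.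
Proof.
move=> x.
have hG : {for x, continuous (G \o clamp01)}.
  by apply: continuous_comp; [exact: clamp01_continuous | exact: Gn_continuous].
have hB := @continuousB_real R id clamp01 x cvg_id (@clamp01_continuous R x).
exact: (@continuousD R R^o R _ _ x hG hB).
Qed.

Lemma Gn_ext_strict x y : x < y -> Gn_ext x < Gn_ext y.
Proof.
move=> xy; rewrite /Gn_ext.
have := clamp01_homo (ltW xy); rewrite le_eqVlt => /predU1P[e | lt].
  rewrite e ltrD2l; move: xy e; rewrite !clamp01E.
  by case: (ltP x 0) => ?; case: (ltP 1 x) => ?; case: (ltP y 0) => ?;
    case: (ltP 1 y) => ?; lra.
apply: ltr_leD; first exact: Gn_strict (clamp01_ge0 _) lt.
exact: clamp01_excess_homo (ltW xy).
Qed.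

Lemma Gn_ext_mono : {mono Gn_ext : x y / x <= y}.
Proof. exact: le_mono Gn_ext_strict. Qed.

Lemma Gn_ext_inj : injective Gn_ext.
Proof. exact: inc_inj Gn_ext_mono. Qed.

Lemma Gn_ext_lt0 x : x < 0 -> Gn_ext x = x.
Proof. by move=> x0; rewrite /Gn_ext clamp01E x0 Gn0 subr0 add0r. Qed.

Lemma Gn_ext_gt1 x : 1 < x -> Gn_ext x = G 1 + (x - 1).
Proof.
by move=> x1; rewrite /Gn_ext clamp01E x1 ifF //; apply/negbTE; rewrite -leNgt; lra.
Qed.

Lemma Gn_ext_surj y : exists x, Gn_ext x == y.
Proof.
have y0 := normr_ge0 y; have yl := ler_norm y; have yr := ler_norm (- y).
rewrite normrN in yr.
have [x _ <-] : exists2 x, x \in `[- `|y| - 1, `|y| + 2] & Gn_ext x = y.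
  apply: IVT; first lra.
    exact/continuous_subspaceT/Gn_ext_continuous.
  rewrite Gn_ext_lt0 ?Gn_ext_gt1; try lra.
  have := Gn1_ge0 R n; rewrite ge_min le_max => ?.
  by apply/andP; split; apply/orP; [left | right]; lra.
by exists x.
Qed.

Definition Gn_ext_inv y : R := xchoose (Gn_ext_surj y).

Lemma Gn_ext_invK y : Gn_ext (Gn_ext_inv y) = y.
Proof. exact/eqP/(xchooseP (Gn_ext_surj y)). Qed.

Lemma Gn_extK x : Gn_ext_inv (Gn_ext x) = x.
Proof. by apply: Gn_ext_inj; rewrite Gn_ext_invK. Qed.

Lemma Gn_ext_inv_homo y y' : y <= y' -> Gn_ext_inv y <= Gn_ext_inv y'.
Proof. by move=> yy; rewrite -Gn_ext_mono !Gn_ext_invK. Qed.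

Lemma Gn_ext_inv_continuous : continuous Gn_ext_inv.
Proof.
move=> y; rewrite -(Gn_ext_invK y).
have := @near_can_continuous R Gn_ext Gn_ext_inv (Gn_ext_inv y).
move=> /(_ (filterE _ Gn_extK) (filterE _ Gn_ext_continuous)) near_ct.
exact: (nbhs_singleton near_ct).
Qed.

(* The inverse of [G : [0, 1] -> [0, G 1]], extended by constants outside [[0, G 1]]. *)
Definition Gn_inv y : R := clamp01 (Gn_ext_inv y).

Lemma Gn_inv_continuous : continuous Gn_inv.
Proof.
move=> y; apply: (@continuous_comp _ _ _ Gn_ext_inv clamp01 y).
  exact: Gn_ext_inv_continuous.
exact: clamp01_continuous.
Qed.

Lemma Gn_inv_homo y y' : y <= y' -> Gn_inv y <= Gn_inv y'.
Proof. by move=> yy'; apply/clamp01_homo/Gn_ext_inv_homo. Qed.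

Lemma Gn_inv_ge0 y : 0 <= Gn_inv y. Proof. exact: clamp01_ge0. Qed.
Lemma Gn_inv_le1 y : Gn_inv y <= 1. Proof. exact: clamp01_le1. Qed.

Lemma GnK x : 0 <= x -> x <= 1 -> Gn_inv (G x) = x.
Proof. by move=> x0 x1; rewrite /Gn_inv -Gn_extE // Gn_extK clamp01_id. Qed.

Lemma Gn_invK y : 0 <= y -> y <= G 1 -> G (Gn_inv y) = y.
Proof.
move=> y0 y1.
have h0 : 0 <= Gn_ext_inv y.
  by rewrite -(Gn_extK 0) Gn_extE ?Gn0 ?ler01 //; apply: Gn_ext_inv_homo.
have h1 : Gn_ext_inv y <= 1.
  by rewrite -(Gn_extK 1) Gn_extE ?ler01 //; apply: Gn_ext_inv_homo.
by rewrite /Gn_inv clamp01_id // -Gn_extE // Gn_ext_invK.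
Qed.

Lemma Gn_inv_top y : G 1 <= y -> Gn_inv y = 1.
Proof.
move=> y1; apply/le_anti; rewrite Gn_inv_le1 -(GnK ler01 (lexx 1)).
exact: Gn_inv_homo.
Qed.

Lemma Gn_inv_bot y : y <= 0 -> Gn_inv y = 0.
Proof.
move=> y0; apply/le_anti; rewrite Gn_inv_ge0 andbT -(GnK (lexx 0) ler01) Gn0.
exact: Gn_inv_homo.
Qed.

End GnInverse.

Definition is_solution {R : realType} (n : nat) (zeta : R) (eps : nat -> R) : Prop :=
  eps 1%N = 1 /\
  (forall j : nat, (1 <= j)%N -> (j <= n.-1)%N ->
     dPn n (1 - eps j.+1) - dPn n (1 - eps j)
     = eps j.+1 * dPn n (1 - eps j.+1) + Pn n (1 - eps j.+1) - j%:R / zeta) /\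
  (forall j : nat, (1 <= j)%N -> (j < n)%N -> eps j.+1 < eps j) /\
  0 <= eps n /\
  zeta = n%:R / (eps n * dPn n (1 - eps n) + Pn n (1 - eps n)).

Lemma system_eqE (R : realType) n (e e' a : R) :
  dPn n (1 - e') - dPn n (1 - e) = e' * dPn n (1 - e') + Pn n (1 - e') - a <->
  Gn n (1 - e') = dPn n (1 - e) - a.
Proof. by rewrite /Gn; split=> h; lra. Qed.

Section Trajectory.
Variable R : realType.
Variable n : nat.
Hypothesis n_gt1 : (1 < n)%N.
Let n_gt0 : (0 < n)%N := ltnW n_gt1.
Implicit Types c : R.

Local Notation G := (@Gn R n).
Local Notation H := (@Hn R n).
Local Notation Ginv := (@Gn_inv R n).

(* [yseq c k] is [1 - eps_(k+1)] for [c = 1 / zeta]; [defect c (n - 1) = 0] is the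
   equation defining [zeta]. *)
Fixpoint yseq c k : R :=
  if k is k'.+1 then Ginv (dPn n (yseq c k') - k'.+1%:R * c) else 0.

Definition defect c k : R := H (yseq c k) - k.+1%:R * c.

Lemma yseq_ge0 c k : 0 <= yseq c k.
Proof. by case: k => [|k] /=; [exact: lexx | exact: Gn_inv_ge0]. Qed.

Lemma yseq_le1 c k : yseq c k <= 1.
Proof. by case: k => [|k] /=; [exact: ler01 | exact: Gn_inv_le1]. Qed.

Lemma yseq_continuous k : continuous (yseq ^~ k).
Proof.
elim: k => [|k IH] /=; first by move=> c; exact: cst_continuous.
move=> c; apply: (@continuous_comp _ _ _ (fun c => dPn n (yseq c k) - k.+1%:R * c) Ginv c).
  have hD : {for c, continuous (fun c => dPn n (yseq c k))}.
    apply: (@continuous_comp _ _ _ (yseq ^~ k) (dPn n) c); first exact: IH.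
    exact: dPn_continuous.
  exact: (@continuousB_real R (fun c => dPn n (yseq c k)) (fun c => k.+1%:R * c) c hD
            (@scale_continuous R k.+1%:R c)).
exact: (@Gn_inv_continuous R n n_gt1).
Qed.

Lemma defect_continuous k : continuous (defect ^~ k).
Proof.
move=> c; have hH : {for c, continuous (fun c => H (yseq c k))}.
  apply: (@continuous_comp _ _ _ (yseq ^~ k) H c); first exact: yseq_continuous.
  exact: Hn_continuous.
exact: (@continuousB_real R (fun c => H (yseq c k)) (fun c => k.+1%:R * c) c hH
          (@scale_continuous R k.+1%:R c)).
Qed.

Lemma yseq_antihomo k c c' : c <= c' -> yseq c' k <= yseq c k.
Proof.
move=> cc'; elim: k => [|k IH] //=; apply: (Gn_inv_homo n_gt1).
have := dPn_homo n (yseq_ge0 c' k) IH.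
have : k.+1%:R * c <= k.+1%:R * c' by apply: ler_wpM2l.
lra.
Qed.

Lemma defect_decreasing k c c' : c < c' -> defect c' k < defect c k.
Proof.
move=> cc'; rewrite /defect.
have := Hn_homo n (yseq_ge0 c' k) (yseq_antihomo k (ltW cc')) (yseq_le1 c k).
have : k.+1%:R * c < k.+1%:R * c' by rewrite ltr_pM2l.
lra.
Qed.

Lemma defect_inj k : injective (defect ^~ k).
Proof.
move=> c c' /= e; apply/eqP; rewrite eq_le !leNgt.
by apply/andP; split; apply/negP => /(defect_decreasing k); rewrite e ltxx.
Qed.

Lemma defect_at0 k : 0 < defect 0 k.
Proof.
rewrite /defect mulr0 subr0.
by have := Hn_ge1 n_gt0 (yseq_ge0 0 k) (yseq_le1 0 k); lra.
Qed.

Lemma yseq_at1 k : yseq 1 k = 0.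
Proof.
elim: k => [|k IH] //=; rewrite IH dPn0 // mulr1.
by apply: (Gn_inv_bot n_gt1); rewrite subr_le0 ler1n.
Qed.

Lemma defect_at1 k : (0 < k)%N -> defect 1 k < 0.
Proof. by move=> k0; rewrite /defect yseq_at1 Hn0 // mulr1 subr_lt0 ltr1n ltnS. Qed.

Lemma defect_root : exists c, [/\ 0 < c, c < 1 & defect c n.-1 = 0].
Proof.
have n1 : (0 < n.-1)%N by rewrite -ltnS prednK.
have [c] : exists2 c, c \in `[0, 1] & defect c n.-1 = 0.
  apply: IVT; first exact: ler01.
    exact/continuous_subspaceT/defect_continuous.
  have h0 := defect_at0 n.-1; have h1 := defect_at1 n1.
  by rewrite ge_min le_max (ltW h1) (ltW h0) orbT.
rewrite in_itv /= => /andP[c0 c1] root; exists c; split => //.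
  rewrite lt_neqAle c0 andbT; apply/eqP => c_eq0; move: root.
  by rewrite -c_eq0; have := defect_at0 n.-1; lra.
rewrite lt_neqAle c1 andbT; apply/eqP => c_eq1; move: root.
by rewrite c_eq1; have := defect_at1 n1; lra.
Qed.

Lemma yseq_stuck_at1 c k m : c <= 1 -> (k <= m)%N -> (m < n)%N ->
  yseq c k = 1 -> yseq c m = 1.
Proof.
move=> c1 + + yk; elim: m => [|m IH]; first by rewrite leqn0 => /eqP <-.
rewrite leq_eqVlt ltnS => /predU1P[<- // | km] mn /=.
rewrite IH ?(ltnW mn) //; apply: (Gn_inv_top n_gt1).
have dP1 : dPn n 1 = n%:R + G 1 by rewrite -(Hn1 R n) /Hn subrK.
have hc : m.+1%:R * c <= m.+1%:R :> R by rewrite -[leRHS]mulr1 ler_wpM2l.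
have hm : m.+1%:R <= n%:R :> R by rewrite ler_nat ltnW.
lra.
Qed.

(* Once [defect] is nonpositive, [yseq] stops increasing, so [defect] drops by at
   least [c] per step. *)
Lemma defect_step c k : 0 < c -> defect c k <= 0 -> defect c k.+1 <= defect c k - c.
Proof.
move=> c0 dk.
have le_y : yseq c k.+1 <= yseq c k.
  rewrite /= -[leRHS](GnK n_gt1 (yseq_ge0 c k) (yseq_le1 c k)).
  by apply: (Gn_inv_homo n_gt1); move: dk; rewrite /defect /Hn; lra.
have := Hn_homo n (yseq_ge0 c k.+1) le_y (yseq_le1 c k).
by rewrite /defect -[k.+2%:R]natr1 mulrDl mul1r; lra.
Qed.

Lemma defect_lt0 c k m : 0 < c -> defect c k <= 0 -> (k < m)%N -> defect c m < 0.
Proof.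
move=> c0 dk; elim: m => // m IH; rewrite ltnS leq_eqVlt => /predU1P[<- | km].
  by have := defect_step c0 dk; lra.
by have := IH km; have := defect_step c0 (ltW (IH km)); lra.
Qed.

Section Root.
Variable c : R.
Hypotheses (c_gt0 : 0 < c) (c_lt1 : c < 1) (root_c : defect c n.-1 = 0).

Lemma root_defect_gt0 k : (k < n.-1)%N -> 0 < defect c k.
Proof.
move=> kn; rewrite ltNge; apply/negP => dk.
by have := defect_lt0 c_gt0 dk kn; rewrite root_c ltxx.
Qed.

Lemma root_yseq_lt1 k : (k <= n.-1)%N -> yseq c k < 1.
Proof.
move=> kn; rewrite lt_neqAle yseq_le1 andbT; apply/eqP => yk.
move: root_c; rewrite /defect (yseq_stuck_at1 (ltW c_lt1) kn _ yk) ?ltn_predL //.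
have : n%:R * c < n%:R :> R by rewrite -[ltRHS]mulr1 ltr_pM2l // ltr0n.
by rewrite Hn1 prednK //; lra.
Qed.

Lemma root_yseqS k : (k < n.-1)%N -> G (yseq c k.+1) = dPn n (yseq c k) - k.+1%:R * c.
Proof.
move=> kn; have := root_defect_gt0 kn; rewrite /defect /Hn => dpos.
have Gy0 : 0 <= G (yseq c k).
  by rewrite -(Gn0 R n); apply: Gn_homo; [exact: lexx | exact: yseq_ge0].
rewrite /=; apply: (Gn_invK n_gt1); first lra.
rewrite leNgt; apply/negP => /ltW/(Gn_inv_top n_gt1) top.
by have := root_yseq_lt1 kn; rewrite /= top ltxx.
Qed.

Lemma root_yseq_lt k : (k < n.-1)%N -> yseq c k < yseq c k.+1.
Proof.
move=> kn; rewrite ltNge; apply/negP => /(Gn_homo n (yseq_ge0 c k.+1)).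
by rewrite root_yseqS //; have := root_defect_gt0 kn; rewrite /defect /Hn; lra.
Qed.

Lemma root_solution : is_solution n c^-1 (fun j => 1 - yseq c j.-1).
Proof.
split; first by rewrite /= subr0.
split.
  by move=> [|k] // _ kn; apply/system_eqE; rewrite /= !subKr invrK root_yseqS.
split.
  by move=> [|k] // _ kn; rewrite /= ltrD2l ltrN2 root_yseq_lt // -ltnS prednK.
split; first by rewrite subr_ge0 yseq_le1.
rewrite /= subKr -Hn_tangent.
move/eqP: root_c; rewrite /defect prednK // subr_eq0 => /eqP ->.
by rewrite invfM ?mulrA ?mulfV ?mul1r // pnatr_eq0 -lt0n.
Qed.

End Root.

Lemma solution_eps_bounds (zeta : R) (eps : nat -> R) j : is_solution n zeta eps ->
  (1 <= j <= n)%N -> 0 <= eps j <= 1.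
Proof.
move=> [e1 [_ [dec [en _]]]] Dj.
pose D := [pred k : nat | (1 <= k <= n)%N].
have anti : {in D &, {homo eps : i j / (i <= j)%N >-> j <= i}}.
  apply: (@homo_leq_in _ D eps (fun a b => b <= a)) => [x | y x z | a b | a].
  - exact: lexx.
  - by move=> h1 h2; apply: le_trans h2 h1.
  - rewrite !inE => /andP[a1 _] /andP[_ bn] m /andP[am mb].
    by rewrite inE /= (leq_trans a1 (ltnW am)) (leq_trans (ltnW mb) bn).
  - by rewrite !inE => /andP[a1 _] /andP[_ an]; apply/ltW/dec.
have D1 : 1%N \in D by rewrite inE leqnn n_gt0.
have Dn : n \in D by rewrite inE n_gt0 leqnn.
have /andP[j1 jn] := Dj.
by rewrite -e1 (le_trans en (anti _ _ Dj Dn jn)) (anti _ _ D1 Dj j1).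
Qed.

Lemma solution_yseq (zeta : R) (eps : nat -> R) : is_solution n zeta eps ->
  forall k, (k < n)%N -> yseq zeta^-1 k = 1 - eps k.+1.
Proof.
move=> sol; case: (sol) => e1 [eqs _]; elim=> [|k IH] kn; first by rewrite e1 subrr.
have kn' : (k.+1 <= n.-1)%N by rewrite -ltnS prednK.
rewrite /= IH ?(ltnW kn) // -(proj1 (system_eqE _ _ _ _) (eqs k.+1 isT kn')).
have /andP[e0 e1'] := solution_eps_bounds sol (kn : (1 <= k.+2 <= n)%N).
by rewrite (GnK n_gt1) //; lra.
Qed.

Lemma solution_defect (zeta : R) (eps : nat -> R) : is_solution n zeta eps ->
  defect zeta^-1 n.-1 = 0.
Proof.
move=> sol; case: (sol) => _ [_ [_ [_ zetaE]]].
rewrite /defect (solution_yseq sol) ?ltn_predL // prednK //.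
have HE : eps n * dPn n (1 - eps n) + Pn n (1 - eps n) = H (1 - eps n).
  by rewrite Hn_tangent subKr.
by rewrite zetaE HE invf_div mulrCA mulfV ?mulr1 ?subrr // pnatr_eq0 -lt0n.
Qed.

End Trajectory.

Theorem mainTheorem8 (R : realType) (n : nat) (hn : (2 < n)%N) :
  exists! zeta : R,
    1 < zeta /\
    exists eps : nat -> R,
      eps 1%N = 1 /\
      (forall j : nat, (1 <= j)%N -> (j <= n.-1)%N ->
         dPn n (1 - eps j.+1) - dPn n (1 - eps j)
         = eps j.+1 * dPn n (1 - eps j.+1) + Pn n (1 - eps j.+1) - j%:R / zeta) /\
      (forall j : nat, (1 <= j)%N -> (j < n)%N -> eps j.+1 < eps j) /\
      0 <= eps n /\
      zeta = n%:R / (eps n * dPn n (1 - eps n) + Pn n (1 - eps n)).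
Proof.
have n_gt1 : (1 < n)%N := ltnW hn.
have [c [c_gt0 c_lt1 root_c]] := defect_root R n_gt1.
exists c^-1; split.
  split; first by rewrite invf_gt1.
  by exists (fun j => 1 - yseq n c j.-1); exact: root_solution.
move=> zeta [_ [eps sol]].
rewrite -[zeta]invrK; congr (_^-1).
by apply: (@defect_inj R n n_gt1 n.-1); rewrite /= root_c (solution_defect n_gt1 sol).
Qed.
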